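(* Let $H$, $L$ be as in the context, assume $L\mid Z$, and let $S$ be a positive divisor of $Z/L$. Then for $\mathcal T_0\subseteq[MZ)$, the pair $(S,\mathcal T_0)$ is a feasible solution if and only if there exist $\ell_{m,s}\in[L)$ for $m\in[M)$, $s\in[S)$ such that $\mathcal T_0=\bigcup_{m\in[M),\,s\in[S)}\mathcal C_{m,s,\ell_{m,s}}$.
   Context: Notation: $[n)=\{0,1,\dots,n-1\}$. Let $M,N,Z$ be positive integers and let $H$ be a binary $MZ\times NZ$ matrix made of $M\times N$ blocks, each a $Z\times Z$ circulant; assume $H$ has no zero row and no two identical rows. Rows are indexed by $[MZ)$. For $i\in[MZ)$ and integer $s$, $\pi^s(i)=Z\lfloor i/Z\rfloor+((i+s)\bmod Z)$, and for $\mathcal T\subseteq[MZ)$, $\pi^s(\mathcal T)=\{\pi^s(x):x\in\mathcal T\}$. Fix an integer $L>1$. A pair $(S,\mathcal T_0)$, $S$ a positive integer and $\mathcal T_0\subseteq[MZ)$, is a feasible solution if, setting $\mathcal T_l=\pi^{lS}(\mathcal T_0)$ for $l\in[L)$, the sets $\mathcal T_0,\dots,\mathcal T_{L-1}$ are pairwise disjoint and their union is $[MZ)$. For $m\in[M)$, $s\in[S)$, $l\in[L)$ define the class $\mathcal C_{m,s,l}=\{mZ+((s+lS+rLS)\bmod Z): r\in\mathbb Z\}$ (these $LS$-classes partition $[MZ)$; for fixed $(m,s)$ the $L$ classes $\mathcal C_{m,s,0},\dots,\mathcal C_{m,s,L-1}$ partition $\{mZ+((s+rS)\bmod Z):r\in\mathbb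 Z\}$). *)

From mathcomp Require Import all_boot all_order all_algebra.
Set Implicit Arguments. Unset Strict Implicit. Unset Printing Implicit Defensive.

Definition block_circulant (M N Z : nat) (H : 'M[bool]_(M * Z, N * Z)) : Prop :=
  forall (r r' : 'I_(M * Z)) (c c' : 'I_(N * Z)),
    r %/ Z = r' %/ Z -> c %/ Z = c' %/ Z ->
    (r' %% Z = (r %% Z + 1) %% Z) -> (c' %% Z = (c %% Z + 1) %% Z) ->
    H r c = H r' c'.

Definition no_zero_row (M N Z : nat) (H : 'M[bool]_(M * Z, N * Z)) : Prop :=
  forall r : 'I_(M * Z), exists c : 'I_(N * Z), H r c.

Definition no_identical_rows (M N Z : nat) (H : 'M[bool]_(M * Z, N * Z)) : Prop :=
  forall r r' : 'I_(M * Z), r <> r' -> exists c : 'I_(N * Z), H r c != H r' c.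

Definition pi_shift (Z s i : nat) : nat := Z * (i %/ Z) + (i + s) %% Z.

Definition Tl (M Z S l : nat) (T0 : {set 'I_(M * Z)}) : {set 'I_(M * Z)} :=
  [set y : 'I_(M * Z) | [exists x in T0, nat_of_ord y == pi_shift Z (l * S) x]].

Definition feasible (M Z L S : nat) (T0 : {set 'I_(M * Z)}) : Prop :=
  0 < S /\
  (forall l1 l2 : 'I_L, l1 <> l2 -> [disjoint Tl S l1 T0 & Tl S l2 T0]) /\
  \bigcup_(l < L) Tl S l T0 = [set: 'I_(M * Z)].

Definition in_class (Z L S m s l x : nat) : Prop :=
  exists r : int,
    (x%:Z = (m * Z)%:Z + modz (s%:Z + (l * S)%:Z + r * (L * S)%:Z) Z%:Z)%R.

From mathcomp Require Import all_boot all_order all_algebra zify.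
Import GRing.Theory Num.Theory.

Set Implicit Arguments.
Unset Strict Implicit.
Unset Printing Implicit Defensive.

(* Group the rows by block x %/ Z and residue x %% S.  The shift pi^S permutes
   each group cyclically and raises the phase (x %% (L * S)) %/ S, an element
   of [0, L), by one modulo L; the class C_{m,s,l} is the set of rows of block
   m, residue s and phase l.  If T0 picks the phase ell_{m,s} in each group,
   then T_l picks the phase ell_{m,s} + l, and these sets partition the rows.
   Conversely, if T0 is feasible then pi^{LS} maps T0 into itself: were
   pi^{LS} x = pi^{lS} b with x, b in T0 and 0 < l < L, the row
   b = pi^{(L-l)S} x would lie in both T0 and T_{L-l}.  So membership in T0
   depends only on group and phase, and since T0 is disjoint from
   T_1, ..., T_{L-1} it contains a single phase per group. *)

Lemma pi_shift_mod Z p d x : p %| Z -> pi_shift Z d x %% p = (x + d) %% p.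
Proof.
move=> pZ; rewrite /pi_shift -modnDm (eqP (dvdn_mulr _ pZ)) add0n modn_mod.
exact: modn_dvdm.
Qed.

Lemma pi_shift0 Z x : pi_shift Z 0 x = x.
Proof. by rewrite /pi_shift addn0 mulnC -divn_eq. Qed.

Lemma pi_shift_lt M Z d x : x < M * Z -> pi_shift Z d x < M * Z.
Proof.
move=> xlt; have Z_gt0 : 0 < Z by case: Z xlt => //; rewrite muln0.
have : x %/ Z < M by rewrite ltn_divLR.
have : (x + d) %% Z < Z by rewrite ltn_pmod.
rewrite /pi_shift; nia.
Qed.

Section PiShift.

Variable Z : nat.
Hypothesis Z_gt0 : 0 < Z.

Lemma pi_shift_div d x : pi_shift Z d x %/ Z = x %/ Z.
Proof. by rewrite /pi_shift mulnC divnMDl // (divn_small (ltn_pmod _ Z_gt0)) addn0. Qed.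

Lemma eq_pi_shift d x y :
  x %/ Z = y %/ Z -> (x + d) %% Z = y %% Z -> pi_shift Z d x = y.
Proof. by move=> eq_div eq_mod; rewrite /pi_shift eq_div eq_mod mulnC -divn_eq. Qed.

Lemma pi_shiftD d1 d2 x : pi_shift Z d1 (pi_shift Z d2 x) = pi_shift Z (d2 + d1) x.
Proof.
apply: eq_pi_shift; first by rewrite !pi_shift_div.
by rewrite -modnDml !pi_shift_mod // modnDml addnA.
Qed.

Lemma pi_shift_inj d : injective (pi_shift Z d).
Proof.
move=> x y eq_xy; rewrite (divn_eq x Z) (divn_eq y Z).
rewrite -(pi_shift_div d x) -(pi_shift_div d y) eq_xy; congr (_ + _).
by apply/eqP; rewrite -(eqn_modDr d) -!(pi_shift_mod d _ (dvdnn Z)) eq_xy.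
Qed.

Lemma exists_pi_shift S x y : 0 < S -> S %| Z ->
  x %/ Z = y %/ Z -> x %% S = y %% S -> exists d, pi_shift Z (d * S) x = y.
Proof.
move=> S_gt0 SZ eq_div eq_mod; set a := y %% Z + (Z - x %% Z).
have xZ : x %% Z <= Z by rewrite ltnW ?ltn_pmod.
have S_dvd_a : S %| a.
  have : a + x %% Z == 0 + x %% Z %[mod S].
    rewrite /a -addnA subnK // -modnDmr (eqP SZ) addn0 add0n.
    by rewrite !(modn_dvdm _ SZ) eq_mod.
  by rewrite eqn_modDr mod0n.
exists (a %/ S); rewrite divnK //; apply: eq_pi_shift => //.
by rewrite -modnDml /a addnCA subnKC // modnDr modn_mod.
Qed.

End PiShift.

Lemma in_class_modn Z L S m s l x : 0 < Z -> L * S %| Z -> s + l * S < L * S ->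
  in_class Z L S m s l x <-> x %/ Z = m /\ x %% (L * S) = s + l * S.
Proof.
move=> Z_gt0 LS_dvd_Z c_lt; have [k def_Z] := dvdnP LS_dvd_Z.
rewrite /in_class -PoszD; set c := s + l * S; split.
- case=> r def_x; set a := (c%:Z + r * (L * S)%:Z)%R in def_x.
  have [t def_t] : exists t : nat, (modz a Z = t%:Z)%R.
    by exists `|modz a Z|%N; rewrite gez0_abs // modz_ge0 // lt0n_neq0.
  have t_lt : t < Z by rewrite -ltz_nat -def_t ltz_pmod.
  have {def_x} -> : x = m * Z + t by apply/eqP; rewrite -eqz_nat def_x def_t.
  split; first by rewrite divnMDl // divn_small ?addn0.
  rewrite def_Z mulnA modnMDl; apply/eqP; rewrite -eqz_nat -modz_nat -def_t.
  have -> : modz (modz a Z) (L * S) = modz a (L * S).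
    by rewrite [in RHS](divz_eq a Z) def_Z PoszM mulrA modzMDl.
  by rewrite /a addrC modzMDl modz_nat modn_small.
- case=> xm x_mod; exists (Posz ((x %% Z) %/ (L * S))).
  have -> : (c%:Z + ((x %% Z) %/ (L * S))%:Z * (L * S)%:Z = (x %% Z)%:Z)%R.
    rewrite -PoszM -PoszD; congr Posz.
    by rewrite -x_mod -(modn_dvdm _ LS_dvd_Z) addnC -divn_eq.
  by rewrite modz_nat modn_mod -PoszD -xm -divn_eq.
Qed.

Definition phase L S x := x %% (L * S) %/ S.

Lemma phase_lt L S x : 0 < L -> 0 < S -> phase L S x < L.
Proof. by move=> L_gt0 S_gt0; rewrite ltn_divLR // ltn_pmod // muln_gt0 L_gt0. Qed.

Lemma modn_phase L S x : x %% (L * S) = x %% S + phase L S x * S.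
Proof.
rewrite /phase {1}(divn_eq (x %% (L * S)) S) addnC modn_dvdm //.
exact: dvdn_mull.
Qed.

Lemma modn_phaseP L S s l x : 0 < S -> s < S ->
  x %% (L * S) = s + l * S <-> x %% S = s /\ phase L S x = l.
Proof.
move=> S_gt0 s_lt; split=> [x_mod | [<- <-]]; last exact: modn_phase.
split; last by rewrite /phase x_mod divnDMl // divn_small.
by rewrite -(modn_dvdm _ (dvdn_mull L (dvdnn S))) x_mod addnC modnMDl modn_small.
Qed.

Lemma in_classP Z L S m s l x : 0 < Z -> L * S %| Z -> s < S -> l < L ->
  in_class Z L S m s l x <-> [/\ x %/ Z = m, x %% S = s & phase L S x = l].
Proof.
move=> Z_gt0 LS_dvd_Z s_lt l_lt.
have c_lt : s + l * S < L * S by nia.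
rewrite in_class_modn // modn_phaseP ?(leq_ltn_trans _ s_lt) //.
by split=> [[-> []] | []].
Qed.

Lemma phase_pi_shift Z L S d x : 0 < L -> 0 < S -> L * S %| Z ->
  phase L S (pi_shift Z (d * S) x) = (phase L S x + d) %% L.
Proof.
move=> L_gt0 S_gt0 LS_dvd_Z.
have rem_lt : x %% S + (phase L S x + d) %% L * S < L * S.
  have := ltn_pmod x S_gt0; have := ltn_pmod (phase L S x + d) L_gt0; nia.
have shifted : x %% (L * S) + d * S =
    (phase L S x + d) %/ L * (L * S) + (x %% S + (phase L S x + d) %% L * S).
  rewrite modn_phase -addnA -mulnDl [in LHS](divn_eq (phase L S x + d) L).
  by rewrite mulnDl mulnA addnCA.
rewrite {1}/phase (pi_shift_mod _ _ LS_dvd_Z) -modnDml shifted modnMDl.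
by rewrite modn_small // divnDMl // divn_small ?add0n // ltn_pmod.
Qed.

Section Rows.

Variables M Z L S : nat.
Hypotheses (Z_gt0 : 0 < Z) (L_gt0 : 0 < L) (S_gt0 : 0 < S) (LS_dvd_Z : L * S %| Z).

Let S_dvd_Z : S %| Z := dvdn_trans (dvdn_mull L (dvdnn S)) LS_dvd_Z.

Local Notation row := 'I_(M * Z).

Definition shift d (x : row) : row := Ordinal (pi_shift_lt d (ltn_ord x)).

Lemma block_lt (x : row) : x %/ Z < M.
Proof. by rewrite ltn_divLR. Qed.

Definition block (x : row) : 'I_M := Ordinal (block_lt x).

Definition residue (x : row) : 'I_S := Ordinal (ltn_pmod x S_gt0).

Lemma shift0 x : shift 0 x = x.
Proof. exact/val_inj/pi_shift0. Qed.

Lemma shiftD d1 d2 x : shift d1 (shift d2 x) = shift (d2 + d1) x.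
Proof. exact/val_inj/pi_shiftD. Qed.

Lemma shift_inj d : injective (shift d).
Proof. by move=> x y /(congr1 val) /pi_shift_inj eq_xy; apply/val_inj/eq_xy. Qed.

Lemma block_shift d x : block (shift d x) = block x.
Proof. exact/val_inj/pi_shift_div. Qed.

Lemma residue_shift d x : residue (shift (d * S) x) = residue x.
Proof. by apply/val_inj; rewrite /= pi_shift_mod // addnC modnMDl. Qed.

Lemma phase_shift d x : phase L S (shift (d * S) x) = (phase L S x + d) %% L.
Proof. exact: phase_pi_shift. Qed.

Lemma exists_shift_split x y : block x = block y -> residue x = residue y ->
  exists n (i : 'I_L), y = shift (i * S) (shift (n * L * S) x).
Proof.
move=> /(congr1 val) eq_block /(congr1 val) eq_residue.
have [d eq_y] := exists_pi_shift Z_gt0 S_gt0 S_dvd_Z eq_block eq_residue.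
have {eq_y} <- : shift (d * S) x = y by apply: val_inj.
exists (d %/ L), (Ordinal (ltn_pmod d L_gt0)).
by rewrite shiftD /= -mulnDl -divn_eq.
Qed.

Lemma Tl_imset l (T0 : {set row}) : Tl S l T0 = shift (l * S) @: T0.
Proof.
apply/setP=> y; rewrite inE.
apply/existsP/imsetP=> [[x /andP [xT /eqP eq_y]] | [x xT ->]].
  by exists x => //; apply: val_inj.
by exists x; rewrite xT /=.
Qed.

Lemma mem_Tl_shift (T0 : {set row}) l x :
  (shift (l * S) x \in Tl S l T0) = (x \in T0).
Proof. by rewrite Tl_imset (mem_imset _ _ (@shift_inj _)). Qed.

Definition phase_cut (ell : 'I_M -> 'I_S -> 'I_L) : {set row} :=
  [set x : row | phase L S x == ell (block x) (residue x)].

Lemma in_class_cut (ell : 'I_M -> 'I_S -> 'I_L) (x : row) :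
  (exists (m : 'I_M) (s : 'I_S), in_class Z L S m s (ell m s) x) <->
  x \in phase_cut ell.
Proof.
rewrite inE; split=> [[m [s]] | /eqP x_phase].
  case/in_classP=> // xm xs ->.
  have -> : block x = m by apply: val_inj.
  by have -> : residue x = s by apply: val_inj.
by exists (block x), (residue x); apply/in_classP.
Qed.

Lemma phase_cutP (ell : 'I_M -> 'I_S -> 'I_L) (T0 : {set row}) :
  (forall x : row,
     x \in T0 <-> exists (m : 'I_M) (s : 'I_S), in_class Z L S m s (ell m s) x) <->
  T0 = phase_cut ell.
Proof.
split=> [T0_cut | -> x]; last by rewrite in_class_cut.
apply/setP=> x.
by apply/idP/idP=> [/(T0_cut x)/in_class_cut | /in_class_cut/(T0_cut x)].
Qed.

Lemma mem_Tl_cut (ell : 'I_M -> 'I_S -> 'I_L) (l : 'I_L) y :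
  (y \in Tl S l (phase_cut ell)) =
  (phase L S y == (ell (block y) (residue y) + l) %% L).
Proof.
have /codomP [x ->] := injF_onto (@shift_inj (l * S)) y.
rewrite mem_Tl_shift inE block_shift residue_shift phase_shift eqn_modDr.
by rewrite !modn_small ?phase_lt.
Qed.

Lemma phase_cut_feasible (ell : 'I_M -> 'I_S -> 'I_L) : feasible L S (phase_cut ell).
Proof.
split=> //; split=> [l1 l2 l1_neq_l2 | ].
  apply/pred0P=> y /=; rewrite !mem_Tl_cut.
  apply/negP=> /andP [/eqP -> /eqP /eqP]; rewrite eqn_modDl !modn_small //.
  by move/eqP/val_inj.
apply/setP=> y; rewrite inE; apply/bigcupP.
set e := ell (block y) (residue y).
exists (Ordinal (ltn_pmod (phase L S y + (L - e)) L_gt0)) => //.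
rewrite mem_Tl_cut /= modnDmr addnCA subnKC; last exact: ltnW.
by rewrite modnDr modn_small ?phase_lt.
Qed.

Section FeasibleSet.

Variable T0 : {set row}.
Hypothesis Tl_disjoint :
  forall l1 l2 : 'I_L, l1 <> l2 -> [disjoint Tl S l1 T0 & Tl S l2 T0].
Hypothesis Tl_cover : \bigcup_(l < L) Tl S l T0 = [set: row].

Lemma Tl_coverP y : exists (l : 'I_L), exists2 x, x \in T0 & y = shift (l * S) x.
Proof.
have : y \in \bigcup_(l < L) Tl S l T0 by rewrite Tl_cover inE.
by case/bigcupP=> l _; rewrite Tl_imset => /imsetP [x xT ->]; exists l, x.
Qed.

Lemma shift_notin x i : x \in T0 -> 0 < i < L -> shift (i * S) x \notin T0.
Proof.
move=> xT /andP [i_gt0 i_lt]; apply/negP=> shifted_T.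
have l0_neq_i : Ordinal L_gt0 <> Ordinal i_lt.
  by move/(congr1 val) => /= i0; rewrite -i0 in i_gt0.
have in_T_0 : shift (i * S) x \in Tl S 0 T0.
  by rewrite -[X in X \in _]shift0 (mem_Tl_shift T0 0).
have in_T_i : shift (i * S) x \in Tl S i T0 by rewrite mem_Tl_shift.
by rewrite (disjointFr (Tl_disjoint l0_neq_i) in_T_0) in in_T_i.
Qed.

Lemma shift_LS_in x : x \in T0 -> shift (L * S) x \in T0.
Proof.
move=> xT; have [l [b bT eq_b]] := Tl_coverP (shift (L * S) x).
have [l0 | l_gt0] := posnP l; first by rewrite eq_b l0 shift0.
have def_b : b = shift ((L - l) * S) x.
  by apply: (@shift_inj (l * S)); rewrite -eq_b shiftD -mulnDl subnK // ltnW.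
have : 0 < L - l < L by have := ltn_ord l; lia.
by move/(shift_notin xT); rewrite -def_b bT.
Qed.

Lemma shift_mulLS_in n x : x \in T0 -> shift (n * L * S) x \in T0.
Proof.
elim: n => [|n IHn] xT; first by rewrite shift0.
by rewrite mulSn mulnDl addnC -shiftD shift_LS_in ?IHn.
Qed.

Lemma mem_T0_phase b x : b \in T0 -> block b = block x -> residue b = residue x ->
  (x \in T0) = (phase L S x == phase L S b).
Proof.
move=> bT eq_block eq_residue.
have [n [i ->]] := exists_shift_split eq_block eq_residue.
have zT := shift_mulLS_in n bT.
have phase_z : phase L S (shift (n * L * S) b) = phase L S b.
  by rewrite phase_shift addnC modnMDl modn_small ?phase_lt.
rewrite phase_shift phase_z.
have [i0 | i_gt0] := posnP i.
  by rewrite i0 shift0 zT addn0 modn_small ?phase_lt ?eqxx.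
rewrite (negbTE (shift_notin zT _)); last by rewrite i_gt0 ltn_ord.
have : (phase L S b + i == phase L S b + 0 %[mod L]) = false.
  by rewrite eqn_modDl mod0n modn_small // eqn0Ngt i_gt0.
by rewrite addn0 (modn_small (phase_lt b L_gt0 S_gt0)) => ->.
Qed.

Lemma exists_block_residue (m : 'I_M) (s : 'I_S) :
  exists x : row, block x = m /\ residue x = s.
Proof.
have s_lt : s < Z := leq_trans (ltn_ord s) (dvdn_leq Z_gt0 S_dvd_Z).
have x_lt : m * Z + s < M * Z.
  apply: (@leq_trans (m.+1 * Z)); first by rewrite mulSn addnC ltn_add2r.
  by rewrite leq_mul2r ltn_ord orbT.
exists (Ordinal x_lt); split; apply: val_inj => /=.
  by rewrite divnMDl // divn_small ?addn0.
by rewrite -modnDml (eqP (dvdn_mull m S_dvd_Z)) add0n modn_small.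
Qed.

Lemma phase_cut_of_feasible : exists ell, T0 = phase_cut ell.
Proof.
have phase_of (m : 'I_M) (s : 'I_S) : exists e : 'I_L,
    forall x, block x = m -> residue x = s -> (x \in T0) = (phase L S x == e).
  have [y [<- <-]] := exists_block_residue m s.
  have [l [b bT ->]] := Tl_coverP y.
  exists (Ordinal (phase_lt b L_gt0 S_gt0)) => x x_block x_residue.
  by apply: mem_T0_phase; rewrite ?x_block ?x_residue ?block_shift ?residue_shift.
have [ell def_ell] := fin_all_exists (fun m => fin_all_exists (phase_of m)).
by exists ell; apply/setP=> x; rewrite inE; apply: def_ell.
Qed.

End FeasibleSet.

End Rows.

Theorem theorem2 (M N Z L : nat) (H : 'M[bool]_(M * Z, N * Z))
  (HM : 0 < M) (HN : 0 < N) (HZ : 0 < Z)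
  (Hcirc : block_circulant H) (Hnz : no_zero_row H) (Hnid : no_identical_rows H)
  (HL : 1 < L) (HLZ : L %| Z)
  (S : nat) (HS : 0 < S) (HSd : S %| Z %/ L)
  (T0 : {set 'I_(M * Z)}) :
  feasible L S T0 <->
  exists ell : 'I_M -> 'I_S -> 'I_L,
    forall x : 'I_(M * Z),
      x \in T0 <-> exists (m : 'I_M) (s : 'I_S), in_class Z L S m s (ell m s) x.
Proof.
have L_gt0 : 0 < L := ltnW HL.
have LS_dvd_Z : L * S %| Z by rewrite -(divnK HLZ) [_ * L]mulnC dvdn_pmul2l.
split=> [[_ [Tl_disjoint Tl_cover]] | [ell /(phase_cutP HZ HS LS_dvd_Z) ->]].
  have [ell T0_cut] := phase_cut_of_feasible HZ L_gt0 HS LS_dvd_Z Tl_disjoint Tl_cover.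
  by exists ell; apply/(phase_cutP HZ HS LS_dvd_Z).
exact: phase_cut_feasible.
Qed.
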